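(* Fix $\phi\in\mathbb{R}^d$ with $\mu=\|\phi\|^2>0$, a ground-truth class $y\in[V]$ with one-hot label ${\bm y}={\bm e}_y$, softmax cross-entropy $f({\bm z},{\bm y})=-\sum_k y_k\log p_k({\bm z})$ (with $L$ a uniform bound on the norms of its first three ${\bm z}$-derivatives), $\kappa\ge0$, and ${\bm W}^t\in\mathbb{R}^{V\times d}$. Let ${\bm z}^t={\bm W}^t\phi$, ${\bm p}^t=\mathrm{softmax}({\bm z}^t)$, ${\bm g}^t={\bm p}^t-{\bm y}$, ${\bm H}^t_{{\bm z}}=\mathrm{diag}({\bm p}^t)-{\bm p}^t({\bm p}^t)^\top$, and $y^*=\arg\max_{j\neq y}p_j^t$. For step size $\eta$ with $|\eta|\in(0,1]$ take $|\rho|=\kappa\sqrt{|\eta|}$, set $\eta'=\eta\mu$ and $\tilde\rho^{\,t}=\rho\sqrt\mu/\|{\bm g}^t\|$ ($0$ if ${\bm g}^t=0$), and assume the sign condition $\eta'\tilde\rho^{\,t}>0$. With $F({\bm W})=f({\bm W}\phi,{\bm y})$, define ${\bm W}^{t+1}(\mathrm{GD})={\bm W}^t-\eta\nabla F({\bm W}^t)$ and ${\bm W}^{t+1}(\mathrm{SAM})={\bm W}^t-\eta\nabla F({\bm W}^t+\rho\nabla F({\bm W}^t)/\|\nabla F({\bm W}^t)\|)$, and $\alpha_i^{(a)}=p_i^{t+1}(a)/p_i^t$ where ${\bm p}^{t+1}(a)=\mathrm{softmax}({\bm W}^{t+1}(a)\phi)$. Then there exists $\eta_0>0$, depending only on $({\bm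 p}^t,{\bm H}^t_{{\bm z}},\|{\bm g}^t\|,\mu,\kappa,L)$, such that for all $0<|\eta|\le\eta_0$, $$\alpha^{\mathrm{SAM}}_{y^*}\le\alpha^{\mathrm{GD}}_{y^*}.$$ Moreover, the inequality is strict whenever $p^t_{y^*}\in(0,1)$ and $\tilde\rho^{\,t}\neq0$, and equality holds when $\tilde\rho^{\,t}=0$.
   Context: $\|\cdot\|$ is Euclidean/Frobenius norm; $\nabla F({\bm W})=({\bm p}({\bm W}\phi)-{\bm y})\phi^\top$. $\alpha_i$ is the one-step confidence ratio of class $i$. *)

From HB Require Import structures.
From mathcomp Require Import all_boot all_order all_algebra.
From mathcomp Require Import reals sequences exp.
Set Implicit Arguments. Unset Strict Implicit. Unset Printing Implicit Defensive.
Import Order.TTheory GRing.Theory Num.Theory.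
Local Open Scope ring_scope.

Section Defs.
Variable R : realType.

Definition vnorm n (v : 'cV[R]_n) : R := Num.sqrt (\sum_i v i 0 ^+ 2).
Definition mnorm m n (A : 'M[R]_(m, n)) : R :=
  Num.sqrt (\sum_i \sum_j A i j ^+ 2).

Definition mu d (phi : 'cV[R]_d) : R := vnorm phi ^+ 2.

Definition softmax V (z : 'cV[R]_V) : 'cV[R]_V :=
  \col_i (expR (z i 0) / \sum_j expR (z j 0)).

Definition onehot V (y : 'I_V) : 'cV[R]_V := \col_i (i == y)%:R.

Definition hessz V (p : 'cV[R]_V) : 'M[R]_V := diag_mx p^T - p *m p^T.

(* gradient of F(W) = f(W phi, y):  (p(W phi) - y) phi^T *)
Definition gradF V d (phi : 'cV[R]_d) (y : 'I_V) (W : 'M[R]_(V, d))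
  : 'M[R]_(V, d) := (softmax (W *m phi) - onehot y) *m phi^T.

Definition normalize m n (A : 'M[R]_(m, n)) : 'M[R]_(m, n) :=
  if mnorm A == 0 then 0 else (mnorm A)^-1 *: A.

Definition gd_step V d (eta : R) (phi : 'cV[R]_d) (y : 'I_V)
  (W : 'M[R]_(V, d)) : 'M[R]_(V, d) := W - eta *: gradF phi y W.

Definition sam_step V d (eta rho : R) (phi : 'cV[R]_d) (y : 'I_V)
  (W : 'M[R]_(V, d)) : 'M[R]_(V, d) :=
  W - eta *: gradF phi y (W + rho *: normalize (gradF phi y W)).

Definition rhotilde V (rho muv : R) (g : 'cV[R]_V) : R :=
  if vnorm g == 0 then 0 else rho * Num.sqrt muv / vnorm g.

Definition alpha V d (phi : 'cV[R]_d) (W Wnext : 'M[R]_(V, d)) (i : 'I_V) : R :=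
  softmax (Wnext *m phi) i 0 / softmax (W *m phi) i 0.

End Defs.

(* In logit space both updates are explicit: with [a = eta mu], [g = p - e_y]
   and [r] the effective radius [rho~], GD moves [z] to [z - a g] and SAM to
   [z - a (p' - e_y)] with [p' = softmax (z + r g)].  Hence the SAM distribution
   is the GD distribution [q] exponentially tilted by [-a (p' - p)], which
   lowers the runner-up [i] as soon as [a (u_i - E_q u) > 0] for [u = p' - p].
   To first order [u = r H_z g], and [(H_z g)_i - E_p (H_z g)] is positive for a
   runner-up class; the second-order remainder and the passage from [p] to [q]
   cost [O(r^2)] and [O(a r)], which the choice of [eta0] keeps below the
   first-order term. *)

From HB Require Import structures.
From mathcomp Require Import all_boot all_order all_algebra.
From mathcomp Require Import reals sequences exp.
From mathcomp Require Import ring lra.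
Set Implicit Arguments. Unset Strict Implicit. Unset Printing Implicit Defensive.
Import Order.TTheory GRing.Theory Num.Theory.
Local Open Scope ring_scope.

Lemma expR_le1Dx2 (R : realType) (x : R) :
  `|x| <= 1/2 -> expR x <= 1 + x + 2 * x ^+ 2.
Proof.
rewrite ler_norml => /andP[x_ge x_le].
have := expR_ge1Dx (- x); have := expRxMexpNx_1 x; have := expR_gt0 x.
nra.
Qed.

(* The term of [centered_jac_residual_gt0] comparing the runner-up [x = p i]
   with the label [q = p y]; [Q] is the sum of the squared non-label masses. *)
Lemma runner_up_label_gap_gt0 (R : realType) (q x Q : R) :
  0 < q -> 0 < x -> q + x <= 1 -> x ^+ 2 <= Q -> Q <= x * (1 - q) ->
  0 < x * (x - (Q - q * (1 - q))) - q * (q - 1 - (Q - q * (1 - q))).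
Proof.
move=> q_gt0 x_gt0 qx_le Q_ge Q_le.
have -> : x * (x - (Q - q * (1 - q))) - q * (q - 1 - (Q - q * (1 - q)))
    = x ^+ 2 - q ^+ 2 + q + (Q - q + q ^+ 2) * (q - x) by ring.
have [le_qx|lt_xq] := leP q x.
- (* the gap is at least [q], as [(1 - q) (x - q) <= x + q] *)
  have : - ((1 - q) * (x - q)) * (x - q) <= (Q - q + q ^+ 2) * (q - x).
    have : 0 <= (x * (1 - q) - Q) * (x - q) by rewrite mulr_ge0 // subr_ge0.
    nra.
  have : (1 - q) * (x - q) * (x - q) <= (x - q) * (x + q).
    have : 0 <= q * (x - q) by apply: mulr_ge0; [exact: ltW | rewrite subr_ge0].
    have : 0 <= (x - q) * ((x + q) - (1 - q) * (x - q)).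
      by rewrite mulr_ge0 // subr_ge0; nra.
    nra.
  nra.
- (* at [Q = x ^ 2] the gap is [x ^ 2 (1 + q - x) + q (1 - q) (1 - q + x)] *)
  have : (Q - q + q ^+ 2) * (q - x) >= (x ^+ 2 - q + q ^+ 2) * (q - x).
    by apply: ler_wpM2r; [rewrite subr_ge0 ltW | lra].
  have : 0 < x ^+ 2 * (1 + q - x) by apply: mulr_gt0; [exact: exprn_gt0 | lra].
  have : 0 <= q * (1 - q) * (1 - q + x).
    by apply: mulr_ge0; [apply: mulr_ge0 |]; lra.
  nra.
Qed.

Section Tilt.
Variables (R : realType) (V : nat).
Implicit Types (p d f g h : 'I_V -> R) (i k : 'I_V).

Definition mean p f : R := \sum_k p k * f k.

Definition tilt p d k : R := p k * expR (d k) / mean p (fun j => expR (d j)).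

(* [softmax_jac p d] is the paper's [H_z d] with [H_z = diag p - p p^T], and
   [residual p y] is its [g = p - e_y]. *)
Definition softmax_jac p d k : R := p k * (d k - mean p d).

Definition centered_jac p d i : R := softmax_jac p d i - mean p (softmax_jac p d).

Definition residual p (y : 'I_V) k : R := p k - (k == y)%:R.

Definition runner_up_gap p : R :=
  \big[Num.min/1]_(y : 'I_V) \big[Num.min/1]_(i | (i != y) &&
    [forall j, (j != y) ==> (p j <= p i)]) centered_jac p (residual p y) i.

(* [1/4] keeps every exponent within the range of [expR_le1Dx2]; [1/64] makes
   the error terms in [tilt_sam_lt] at most half of the first-order one. *)
Definition sam_radius p : R := Num.min (1/4) (runner_up_gap p / 64).

Lemma eq_mean p f g : f =1 g -> mean p f = mean p g.
Proof. by move=> fg; apply: eq_bigr => k _; rewrite fg. Qed.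

Lemma meanD p f g : mean p (fun k => f k + g k) = mean p f + mean p g.
Proof. by rewrite /mean -big_split; apply: eq_bigr => k _; rewrite mulrDr. Qed.

Lemma meanZ p b f : mean p (fun k => b * f k) = b * mean p f.
Proof. by rewrite /mean mulr_sumr; apply: eq_bigr => k _; rewrite mulrCA. Qed.

Lemma eq_tilt p d d' : d =1 d' -> tilt p d =1 tilt p d'.
Proof. by move=> dd' k; rewrite /tilt dd' (eq_mean _ (fun j => congr1 expR (dd' j))). Qed.

Lemma sam_radius_le p y i : i != y -> (forall j, j != y -> p j <= p i) ->
  sam_radius p <= 1/4 /\ 64 * sam_radius p <= centered_jac p (residual p y) i.
Proof.
move=> i_ne_y i_max; split; first by rewrite ge_min lexx.
rewrite mulrC -ler_pdivlMr // /sam_radius ge_min; apply/orP; right.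
rewrite ler_pM2r ?invr_gt0 //; apply: le_trans (bigmin_le _ y _) _.
by apply: bigmin_le_cond; rewrite i_ne_y; apply/forallP => j; apply/implyP; apply: i_max.
Qed.

Section Distribution.
Variable p : 'I_V -> R.
Hypotheses (p_gt0 : forall k, 0 < p k) (p_sum1 : \sum_k p k = 1).

Lemma dim_gt0 : (0 < V)%N.
Proof.
rewrite lt0n; apply/eqP => V0; move: p_sum1; rewrite big_pred0 => [|k].
  by move/eqP; rewrite eq_sym oner_eq0.
by have := ltn_ord k; move: (nat_of_ord k) => n; rewrite V0.
Qed.

Lemma dist_le1 k : p k <= 1.
Proof.
rewrite -p_sum1 (bigD1 k) //= lerDl.
by apply: sumr_ge0 => j _; apply: ltW.
Qed.

Lemma mean_cst c : mean p (fun=> c) = c.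
Proof. by rewrite /mean -mulr_suml p_sum1 mul1r. Qed.

Lemma ler_mean f g : (forall k, f k <= g k) -> mean p f <= mean p g.
Proof. by move=> fg; apply: ler_sum => k _; rewrite ler_pM2l. Qed.

Lemma mean_norm_le h M : (forall k, `|h k| <= M) -> `|mean p h| <= M.
Proof.
move=> hM; rewrite -[M]mean_cst; apply: le_trans (ler_norm_sum _ _ _) _.
apply: ler_sum => k _; rewrite normrM gtr0_norm // ler_pM2l //.
Qed.

Lemma sub_mean h i : h i - mean p h = mean p (fun k => h i - h k).
Proof. by rewrite /mean -[X in X - _]mean_cst /mean -sumrB; apply: eq_bigr => k _; ring. Qed.

Lemma mean_exp_gt0 d : 0 < mean p (fun k => expR (d k)).
Proof.
rewrite /mean (bigD1 (Ordinal dim_gt0)) //= ltr_pwDl ?mulr_gt0 ?expR_gt0 //.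
by apply: sumr_ge0 => k _; rewrite mulr_ge0 ?expR_ge0 // ltW.
Qed.

Lemma tilt_gt0 d k : 0 < tilt p d k.
Proof. by rewrite divr_gt0 ?mulr_gt0 ?expR_gt0 ?mean_exp_gt0. Qed.

Lemma tilt_sum1 d : \sum_k tilt p d k = 1.
Proof. by rewrite -mulr_suml mulfV // gt_eqF // mean_exp_gt0. Qed.

(* [expR] lies above its tangent at [d i]. *)
Lemma tilt_lt d i : d i < mean p d -> tilt p d i < p i.
Proof.
move=> lt_di; have Z_gt0 := mean_exp_gt0 d; have e_gt0 := expR_gt0 (d i).
have Z_ge : expR (d i) * (1 + (mean p d - d i)) <= mean p (fun k => expR (d k)).
  have -> : expR (d i) * (1 + (mean p d - d i))
      = mean p (fun k => expR (d i) * (1 - d i) + expR (d i) * d k).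
    by rewrite meanD mean_cst meanZ; ring.
  apply: ler_mean => k.
  have -> : expR (d k) = expR (d i) * expR (d k - d i) by rewrite -expRD addrC subrK.
  rewrite -mulrDr ler_pM2l // (le_trans _ (expR_ge1Dx _)) //; lra.
rewrite /tilt ltr_pdivrMr // ltr_pM2l //; nra.
Qed.

Lemma tilt_near d t : t <= 1/4 -> (forall k, `|d k| <= t) ->
  forall k, `|tilt p d k - p k| <= 4 * t * p k.
Proof.
move=> t_le d_le k; have t_ge0 : 0 <= t := le_trans (normr_ge0 _) (d_le k).
have d_bd j : - t <= d j <= t by rewrite -ler_norml.
set Z := mean p (fun j => expR (d j)); have Z_gt0 : 0 < Z := mean_exp_gt0 d.
have Z_lo : expR (- t) <= Z.
  by rewrite -[expR _]mean_cst; apply: ler_mean => j; rewrite ler_expR; case/andP: (d_bd j).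
have Z_hi : Z <= expR t.
  by rewrite -[expR t]mean_cst; apply: ler_mean => j; rewrite ler_expR; case/andP: (d_bd j).
have /andP[ek_lo ek_hi] : expR (- t) <= expR (d k) <= expR t.
  by rewrite !ler_expR d_bd.
have E2_le : expR t ^+ 2 <= 1 + 4 * t.
  rewrite -expRM_natl; apply: le_trans (expR_le1Dx2 _) _.
    by rewrite ger0_norm ?mulr_ge0 //; lra.
  nra.
have spread : expR t - expR (- t) <= 4 * t * expR (- t).
  have := expRxMexpNx_1 t; have := expR_gt0 (- t).
  have : 0 <= expR (- t) * (1 + 4 * t - expR t ^+ 2) by rewrite mulr_ge0 ?subr_ge0 ?expR_ge0.
  nra.
have -> : tilt p d k - p k = p k * (expR (d k) - Z) / Z.
  by rewrite /tilt -/Z; field; rewrite gt_eqF.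
rewrite -mulrA normrM (gtr0_norm (p_gt0 k)) mulrC ler_pM2r //.
rewrite normrM normfV (gtr0_norm Z_gt0) ler_pdivrMr // ler_norml.
apply/andP; split; nra.
Qed.

Lemma centered_jac_exp_tilt d i :
  mean p (fun k => expR (d k)) * (tilt p d i - p i - mean p (fun k => tilt p d k - p k))
  = centered_jac p (fun k => expR (d k)) i.
Proof.
set Z := mean p (fun k => expR (d k)).
have Z_neq0 : Z != 0 by rewrite gt_eqF // mean_exp_gt0.
rewrite /centered_jac.
have -> : mean p (fun k => tilt p d k - p k)
    = mean p (fun k => p k * expR (d k)) / Z - mean p p.
  by rewrite /mean mulr_suml -sumrB; apply: eq_bigr => k _; rewrite /tilt -/Z; field.
have -> : mean p (softmax_jac p (fun k => expR (d k)))
    = mean p (fun k => p k * expR (d k)) - Z * mean p p.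
  by rewrite /mean mulr_sumr -sumrB; apply: eq_bigr => k _; rewrite /softmax_jac -/Z; ring.
by rewrite /softmax_jac /tilt -/Z; field.
Qed.

Lemma centered_jac_affine f c b g E i : (forall k, f k = c + b * g k + E k) ->
  centered_jac p f i = b * centered_jac p g i + centered_jac p E i.
Proof.
move=> fE.
have jacE k : softmax_jac p f k = b * softmax_jac p g k + softmax_jac p E k.
  by rewrite /softmax_jac (eq_mean _ fE) !meanD mean_cst meanZ fE; ring.
by rewrite /centered_jac (eq_mean _ jacE) meanD meanZ jacE; ring.
Qed.

Lemma centered_jac_bound f M i : (forall k, 0 <= f k <= M) ->
  `|centered_jac p f i| <= 2 * M.
Proof.
move=> f_bd.
have mean_ge0 : 0 <= mean p f.
  apply: sumr_ge0 => k _; apply: mulr_ge0; first exact: ltW.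
  by case/andP: (f_bd k).
have mean_le : mean p f <= M.
  by rewrite -[M]mean_cst; apply: ler_mean => k; case/andP: (f_bd k).
have jac_le k : `|softmax_jac p f k| <= M.
  rewrite /softmax_jac normrM gtr0_norm // -[M]mul1r.
  apply: ler_pM; [exact: ltW | exact: normr_ge0 | exact: dist_le1 |].
  by rewrite ler_norml; case/andP: (f_bd k) => ? ?; apply/andP; split; lra.
apply: le_trans (ler_normB _ _) _.
have := jac_le i; have := mean_norm_le jac_le; lra.
Qed.

Lemma tilt_centered_ge g r i : (forall k, `|g k| <= 1) -> `|r| <= 1/4 ->
  16 * `|r| <= centered_jac p g i ->
  r ^+ 2 * centered_jac p g i / 2 <=
  r * (tilt p (fun k => r * g k) i - p i
       - mean p (fun k => tilt p (fun k => r * g k) k - p k)).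
Proof.
move=> g_le r_le r_C.
set C := centered_jac p g i in r_C *; set X := (X in _ <= r * X).
set Z := mean p (fun k => expR (r * g k)).
have Z_gt0 : 0 < Z := mean_exp_gt0 _.
have rg_le k : `|r * g k| <= `|r| by rewrite normrM ler_piMr.
have rg2_le k : (r * g k) ^+ 2 <= `|r| ^+ 2.
  by rewrite -real_normK ?num_real // lerXn2r ?nnegrE.
have r2_le : `|r| ^+ 2 <= 1/16 by have := normr_ge0 r; nra.
have exp_le k : expR (r * g k) <= 1 + r * g k + 2 * (r * g k) ^+ 2.
  by apply: expR_le1Dx2; apply: le_trans (rg_le k) _; lra.
have Z_le : Z <= 3/2.
  rewrite -[3/2]mean_cst; apply: ler_mean => k.
  have := exp_le k; have := rg2_le k; move: (rg_le k); rewrite ler_norml; lra.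
pose E k := expR (r * g k) - 1 - r * g k.
have E_bd k : 0 <= E k <= 2 * `|r| ^+ 2.
  have := expR_ge1Dx (r * g k); have := exp_le k; have := rg2_le k.
  by rewrite /E => *; apply/andP; split; lra.
have ZX : Z * X = r * C + centered_jac p E i.
  rewrite /Z /X (centered_jac_exp_tilt (fun k => r * g k)) /C.
  by apply: (centered_jac_affine (c := 1)) => k; rewrite /E; ring.
have Err_le := centered_jac_bound i E_bd.
have rErr : `|r * centered_jac p E i| <= `|r| ^+ 2 * C / 4.
  rewrite normrM; apply: le_trans (ler_wpM2l (normr_ge0 r) Err_le) _.
  have := ler_wpM2l (sqr_ge0 `|r|) r_C; lra.
have rZX : 3/4 * (r ^+ 2 * C) <= Z * (r * X).
  have -> : Z * (r * X) = `|r| ^+ 2 * C + r * centered_jac p E i.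
    by rewrite mulrCA ZX real_normK ?num_real; ring.
  rewrite -real_normK ?num_real //.
  by move: rErr; rewrite ler_norml => /andP[? _]; lra.
have C_ge0 : 0 <= C by apply: le_trans _ r_C; rewrite mulr_ge0.
have rX_ge0 : 0 <= r * X.
  rewrite -(pmulr_rge0 _ Z_gt0); apply: le_trans rZX.
  by have := mulr_ge0 (sqr_ge0 r) C_ge0; lra.
have : Z * (r * X) <= 3/2 * (r * X) by rewrite ler_wpM2r.
lra.
Qed.

Lemma residual_le1 y k : `|residual p y k| <= 1.
Proof.
rewrite ler_norml /residual; have := p_gt0 k; have := dist_le1 k.
by case: (k == y) => /= *; apply/andP; split; lra.
Qed.

(* Average the differences against [i]: the one against the label [y] is
   [runner_up_label_gap_gt0], any other [k] gives [(p i - p k) (p i + p k - s)]. *)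
Lemma centered_jac_residual_gt0 y i : i != y -> (forall j, j != y -> p j <= p i) ->
  0 < centered_jac p (residual p y) i.
Proof.
move=> i_ne_y i_max.
set Q := \sum_(k | k != y) p k ^+ 2.
have rest_sum : \sum_(k | k != y) p k = 1 - p y by move: p_sum1; rewrite (bigD1 y) //=; lra.
have Q_le : Q <= p i * (1 - p y).
  rewrite -rest_sum mulr_sumr; apply: ler_sum => k k_ne_y.
  by rewrite expr2 ler_pM2r // i_max.
have Q_ge : p i ^+ 2 <= Q.
  by rewrite /Q (bigD1 i) //= lerDl; apply: sumr_ge0 => k _; apply: sqr_ge0.
have pyi_le : p y + p i <= 1.
  have : p i <= \sum_(k | k != y) p k.
    by rewrite (bigD1 i) //= lerDl; apply: sumr_ge0 => k _; apply: ltW.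
  lra.
set s := Q - p y * (1 - p y).
have jacE j : softmax_jac p (residual p y) j = p j * (p j - (j == y)%:R - s).
  congr (_ * (_ - _)); rewrite /mean /residual.
  rewrite (eq_bigr (fun k => p k ^+ 2 - p k * (k == y)%:R)) => [|k _]; last by ring.
  rewrite sumrB.
  have -> : \sum_k p k * (k == y)%:R = p y.
    by rewrite (bigD1 y) //= eqxx mulr1 big1 ?addr0 // => k /negbTE ->; rewrite mulr0.
  by rewrite /s /Q (bigD1 y) //=; ring.
rewrite /centered_jac sub_mean // /mean (bigD1 y) //= ltr_pwDl //.
  rewrite mulr_gt0 // !jacE eqxx (negbTE i_ne_y) subr0.
  exact: runner_up_label_gap_gt0.
apply: sumr_ge0 => k k_ne_y; apply: mulr_ge0; first exact: ltW.
rewrite !jacE (negbTE i_ne_y) (negbTE k_ne_y) !subr0.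
have -> : p i * (p i - s) - p k * (p k - s) = (p i - p k) * (p i + p k - s) by ring.
apply: mulr_ge0; first by rewrite subr_ge0 i_max.
have : 0 <= p y * (1 - p y).
  by apply: mulr_ge0; [exact: ltW | rewrite subr_ge0 dist_le1].
have := p_gt0 y; have := p_gt0 k; rewrite /s; nra.
Qed.

Lemma sam_radius_gt0 : 0 < sam_radius p.
Proof.
rewrite lt_min; apply/andP; split; first lra.
apply: divr_gt0; last lra.
apply/bigmin_gtP; split=> [|y _]; first lra.
apply/bigmin_gtP; split=> [|i /andP[i_ne_y /forallP i_max]]; first lra.
apply: centered_jac_residual_gt0 => // j j_ne_y.
by have := i_max j; rewrite j_ne_y.
Qed.

End Distribution.

Section SamTilt.
Variable p : 'I_V -> R.
Hypotheses (p_gt0 : forall k, 0 < p k) (p_sum1 : \sum_k p k = 1).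

Lemma tilt_sam_lt g q p' a r i : (forall k, `|g k| <= 1) ->
  (forall k, q k = tilt p (fun k => - a * g k) k) ->
  (forall k, p' k = tilt p (fun k => r * g k) k) ->
  0 < a * r -> `|a| <= 1/4 -> `|r| <= 1/4 ->
  64 * `|a| <= centered_jac p g i -> 64 * `|r| <= centered_jac p g i ->
  tilt q (fun k => - a * (p' k - p k)) i < q i.
Proof.
move=> g_le qE p'E ar_gt0 a_le r_le a_C r_C.
set C := centered_jac p g i in a_C r_C.
have ar_norm : `|a| * `|r| = a * r by rewrite -normrM gtr0_norm.
have r_neq0 : r != 0 by apply: contraTneq ar_gt0 => ->; rewrite mulr0 ltxx.
have C_gt0 : 0 < C by apply: lt_le_trans r_C; rewrite pmulr_rgt0 // normr_gt0.
set u := fun k => p' k - p k.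
set X := u i - mean p u; set D := mean q u - mean p u.
have uE k : u k = tilt p (fun k => r * g k) k - p k by rewrite /u p'E.
have u_le k : `|u k| <= 4 * `|r| * p k.
  by rewrite uE; apply: tilt_near => // j; rewrite normrM ler_piMr.
have qp_le k : `|q k - p k| <= 4 * `|a| * p k.
  by rewrite qE; apply: tilt_near => // j; rewrite normrM normrN ler_piMr.
have D_le : `|D| <= 16 * (`|a| * `|r|).
  rewrite -[X in _ <= X](mean_cst p_sum1) /D /mean -sumrB.
  apply: le_trans (ler_norm_sum _ _ _) _; apply: ler_sum => k _.
  rewrite -mulrBl normrM.
  apply: le_trans (ler_pM (normr_ge0 _) (normr_ge0 _) (qp_le k) (u_le k)) _.
  have -> : 4 * `|a| * p k * (4 * `|r| * p k) = p k * (16 * (`|a| * `|r|) * p k).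
    by ring.
  apply: ler_wpM2l; first exact: ltW.
  by rewrite ler_piMr ?dist_le1 // !mulr_ge0.
have rX : r ^+ 2 * C / 2 <= r * X.
  rewrite /X uE (eq_mean _ uE).
  apply: (tilt_centered_ge p_gt0 p_sum1 g_le r_le); apply: le_trans r_C.
  by have := normr_ge0 r; lra.
have aX : a * r * C / 2 <= a * X.
  have r2_gt0 : 0 < r ^+ 2 by rewrite -real_normK ?num_real // exprn_gt0 // normr_gt0.
  rewrite -(ler_pM2l r2_gt0); have := ler_wpM2l (ltW ar_gt0) rX; lra.
have aD : `|a * D| <= a * r * C / 4.
  rewrite normrM -ar_norm; apply: le_trans (ler_wpM2l (normr_ge0 a) D_le) _.
  have := ler_wpM2l (mulr_ge0 (normr_ge0 a) (normr_ge0 r)) a_C; lra.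
apply: tilt_lt => [k | | ]; first by rewrite qE tilt_gt0.
  by rewrite (eq_bigr _ (fun k _ => qE k)) tilt_sum1.
rewrite meanZ.
have : a * X - a * D = a * (p' i - p i) - a * mean q u by rewrite /X /D /u; ring.
move: aD; rewrite ler_norml => /andP[_ aD].
have := mulr_gt0 ar_gt0 C_gt0; lra.
Qed.

End SamTilt.

End Tilt.

Section Softmax.
Variables (R : realType) (V : nat).
Implicit Types (z w : 'cV[R]_V).

Lemma sum_expR_gt0 z (k : 'I_V) : 0 < \sum_j expR (z j 0).
Proof.
rewrite (bigD1 k) //= ltr_pwDl ?expR_gt0 //.
by apply: sumr_ge0 => j _; apply: expR_ge0.
Qed.

Lemma softmax_gt0 z k : 0 < softmax z k 0.
Proof. by rewrite mxE divr_gt0 ?expR_gt0 // (sum_expR_gt0 _ k). Qed.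

Lemma softmax_sum1 z : (0 < V)%N -> \sum_k softmax z k 0 = 1.
Proof.
move=> V_gt0; rewrite (eq_bigr _ (fun k _ => mxE _ _ k 0)) /= -mulr_suml.
by rewrite mulfV // gt_eqF // (sum_expR_gt0 _ (Ordinal V_gt0)).
Qed.

Lemma softmax_add z w k :
  softmax (z + w) k 0 = tilt (fun j => softmax z j 0) (fun j => w j 0) k.
Proof.
have S_gt0 := sum_expR_gt0 z k; have Szw_gt0 := sum_expR_gt0 (z + w) k.
rewrite /tilt /mean.
have -> : \sum_j softmax z j 0 * expR (w j 0)
    = (\sum_j expR ((z + w) j 0)) / \sum_j expR (z j 0).
  by rewrite mulr_suml; apply: eq_bigr => j _; rewrite !mxE expRD; ring.
by rewrite !mxE expRD; field; rewrite !gt_eqF.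
Qed.

Lemma softmax_sam_lt_gd z (y i : 'I_V) (a r : R) :
  let p := fun k => softmax z k 0 in
  i != y -> (forall j, j != y -> p j <= p i) -> 0 < a * r ->
  `|a| <= sam_radius p -> `|r| <= sam_radius p ->
  softmax (z - a *: (softmax (z + r *: (softmax z - onehot R y)) - onehot R y)) i 0
  < softmax (z - a *: (softmax z - onehot R y)) i 0.
Proof.
move=> p i_ne_y i_max ar_gt0 a_le r_le.
have V_gt0 : (0 < V)%N := leq_ltn_trans (leq0n y) (ltn_ord y).
have p_gt0 k : 0 < p k := softmax_gt0 z k.
have p_sum1 : \sum_k p k = 1 := softmax_sum1 z V_gt0.
have [c_le c_C] := sam_radius_le i_ne_y i_max.
set g := softmax z - onehot R y; set p' := softmax (z + r *: g).
have -> : z - a *: (p' - onehot R y) = (z - a *: g) + (- a) *: (p' - softmax z).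
  by apply/matrixP => k j; rewrite /g !mxE; ring.
have dE : (fun k => ((- a) *: (p' - softmax z)) k 0) =1 (fun k => - a * (p' k 0 - p k)).
  by move=> k; rewrite /p !mxE.
rewrite softmax_add (eq_tilt _ dE).
apply: (tilt_sam_lt p_gt0 p_sum1 (g := residual p y) (r := r)) => [k|k|k|||||].
- exact: residual_le1.
- by rewrite softmax_add; apply: eq_tilt => j; rewrite /residual /p !mxE mulNr.
- by rewrite /p' softmax_add; apply: eq_tilt => j; rewrite /residual /p !mxE.
- exact: ar_gt0.
- exact: le_trans a_le c_le.
- exact: le_trans r_le c_le.
- by apply: le_trans c_C; rewrite ler_pM2l.
- by apply: le_trans c_C; rewrite ler_pM2l.
Qed.

End Softmax.

Section Steps.
Variables (R : realType) (V d : nat).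
Implicit Types (phi : 'cV[R]_d) (y : 'I_V) (W : 'M[R]_(V, d)).

Lemma trmx_mul_self phi : phi^T *m phi = (mu phi)%:M.
Proof.
apply/matrixP => i j; rewrite !ord1 !mxE mulr1n /mu /vnorm sqr_sqrtr.
  by apply: eq_bigr => l _; rewrite !mxE expr2.
by apply: sumr_ge0 => l _; apply: sqr_ge0.
Qed.

Lemma outer_mulmx (G : 'cV[R]_V) phi : G *m phi^T *m phi = mu phi *: G.
Proof. by rewrite -mulmxA trmx_mul_self mul_mx_scalar. Qed.

Lemma mnorm_outer (G : 'cV[R]_V) phi : mnorm (G *m phi^T) = vnorm G * vnorm phi.
Proof.
rewrite /mnorm /vnorm -sqrtrM; last by apply: sumr_ge0 => l _; apply: sqr_ge0.
congr Num.sqrt; rewrite mulr_suml; apply: eq_bigr => i _.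
rewrite mulr_sumr; apply: eq_bigr => j _.
by rewrite !mxE big_ord1 !mxE exprMn.
Qed.

Lemma gd_logits eta phi y W : gd_step eta phi y W *m phi
  = W *m phi - (eta * mu phi) *: (softmax (W *m phi) - onehot R y).
Proof. by rewrite /gd_step /gradF mulmxBl -scalemxAl outer_mulmx scalerA. Qed.

Lemma sam_logits eta rho phi y W : sam_step eta rho phi y W *m phi
  = W *m phi - (eta * mu phi) *:
      (softmax ((W + rho *: normalize (gradF phi y W)) *m phi) - onehot R y).
Proof. by rewrite /sam_step /gradF mulmxBl -scalemxAl outer_mulmx scalerA. Qed.

Lemma perturbed_logits rho phi y W : 0 < mu phi ->
  let g := softmax (W *m phi) - onehot R y in
  (W + rho *: normalize (gradF phi y W)) *m phi = W *m phi + rhotilde rho (mu phi) g *: g.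
Proof.
move=> mu_gt0 g.
have phi_gt0 : 0 < vnorm phi.
  rewrite lt_def (sqrtr_ge0 _ : 0 <= vnorm phi) andbT.
  by apply: contraTneq mu_gt0 => phi0; rewrite /mu phi0 expr2 mulr0 ltxx.
have sqrt_mu : Num.sqrt (mu phi) = vnorm phi by rewrite /mu sqrtr_sqr ger0_norm ?sqrtr_ge0.
rewrite /normalize /gradF -/g mnorm_outer /rhotilde sqrt_mu mulf_eq0 (gt_eqF phi_gt0) orbF.
case: eqP => [_|/eqP g_neq0]; first by rewrite scaler0 addr0 scale0r addr0.
rewrite mulmxDl -!scalemxAl outer_mulmx !scalerA /mu.
by congr (_ + _ *: _); field; rewrite g_neq0 gt_eqF.
Qed.

Lemma alpha_sam_eq_gd eta rho phi y W i : 0 < mu phi ->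
  rhotilde rho (mu phi) (softmax (W *m phi) - onehot R y) = 0 ->
  alpha phi W (sam_step eta rho phi y W) i = alpha phi W (gd_step eta phi y W) i.
Proof.
move=> mu_gt0 rt0.
by rewrite /alpha [in LHS]sam_logits perturbed_logits // rt0 scale0r addr0 gd_logits.
Qed.

Lemma alpha_sam_lt_gd eta rho phi y W i : 0 < mu phi ->
  let p := softmax (W *m phi) in
  let rt := rhotilde rho (mu phi) (p - onehot R y) in
  i != y -> (forall j, j != y -> p j 0 <= p i 0) -> 0 < eta * mu phi * rt ->
  `|eta * mu phi| <= sam_radius (fun k => p k 0) ->
  `|rt| <= sam_radius (fun k => p k 0) ->
  alpha phi W (sam_step eta rho phi y W) i < alpha phi W (gd_step eta phi y W) i.
Proof.
move=> mu_gt0 p rt i_ne_y i_max sign_gt0 a_le r_le.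
rewrite /alpha ltr_pM2r ?invr_gt0 ?softmax_gt0 //.
rewrite [in X in X < _]sam_logits perturbed_logits // gd_logits.
exact: (softmax_sam_lt_gd i_ne_y i_max sign_gt0 a_le r_le).
Qed.

End Steps.

Section StepSize.
Variables (R : realType) (V : nat).
Implicit Types (p : 'cV[R]_V) (H : 'M[R]_V) (gn m kappa eta rho : R).

(* [H_z] is a function of [p], hence not needed; the fallback value [1] is
   only reached when [g = 0], where SAM and GD coincide. *)
Definition sam_eta0 (p : 'cV[R]_V) (_ : 'M[R]_V) (gn m kappa : R) : R :=
  let c := sam_radius (fun k => p k 0) in
  let e := Num.min (c / m) (c ^+ 2 * gn ^+ 2 / (kappa ^+ 2 * m + 1)) in
  if 0 < e then e else 1.

Lemma sam_eta0_gt0 p H gn m kappa : 0 < sam_eta0 p H gn m kappa.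
Proof. by rewrite /sam_eta0; case: ifP => // _; apply: ltr01. Qed.

Lemma step_sizes_le_sam_radius p H gn m kappa eta rho :
  let c := sam_radius (fun k => p k 0) in
  0 < c -> 0 < m -> 0 < gn -> 0 <= kappa ->
  `|eta| <= sam_eta0 p H gn m kappa -> `|rho| = kappa * Num.sqrt `|eta| ->
  `|eta * m| <= c /\ `|rho * Num.sqrt m / gn| <= c.
Proof.
move=> c c_gt0 m_gt0 gn_gt0 kappa_ge0.
have den_gt0 : 0 < kappa ^+ 2 * m + 1.
  by have := mulr_ge0 (sqr_ge0 kappa) (ltW m_gt0); lra.
have e_gt0 : 0 < Num.min (c / m) (c ^+ 2 * gn ^+ 2 / (kappa ^+ 2 * m + 1)).
  by rewrite lt_min !divr_gt0 ?mulr_gt0 ?exprn_gt0.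
rewrite /sam_eta0 -/c e_gt0 le_min => /andP[eta_le1 eta_le2] rhoE; split.
  by rewrite normrM (gtr0_norm m_gt0) -ler_pdivlMr.
have rt2 : `|rho * Num.sqrt m / gn| ^+ 2 * gn ^+ 2 = kappa ^+ 2 * `|eta| * m.
  rewrite real_normK ?num_real // expr_div_n exprMn sqr_sqrtr ?ltW //.
  rewrite -[rho ^+ 2]real_normK ?num_real // rhoE exprMn sqr_sqrtr //.
  by field; rewrite gt_eqF.
rewrite -(ler_pXn2r (_ : 0 < 2)%N) ?nnegrE ?normr_ge0 ?(ltW c_gt0) //.
rewrite -(ler_pM2r (exprn_gt0 2 gn_gt0)) rt2.
move: eta_le2; rewrite ler_pdivlMr //.
have := normr_ge0 eta; nra.
Qed.

End StepSize.

Unset Implicit Arguments.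

Theorem corollary4 (R : realType) (V : nat) :
  exists eta0 : 'cV[R]_V -> 'M[R]_V -> R -> R -> R -> R,
  forall (d : nat) (phi : 'cV[R]_d) (y : 'I_V) (kappa : R) (W : 'M[R]_(V, d)),
    0 < mu phi -> 0 <= kappa ->
    let p := softmax (W *m phi) in
    let g := p - onehot R y in
    let e0 := eta0 p (hessz p) (vnorm g) (mu phi) kappa in
    0 < e0 /\
    forall ystar : 'I_V, ystar != y ->
      (forall j : 'I_V, j != y -> p j 0 <= p ystar 0) ->
    forall eta rho : R,
      0 < `|eta| -> `|eta| <= 1 -> `|eta| <= e0 ->
      `|rho| = kappa * Num.sqrt `|eta| ->
      let rt := rhotilde rho (mu phi) g in
      let aGD := alpha phi W (gd_step eta phi y W) ystar in
      let aSAM := alpha phi W (sam_step eta rho phi y W) ystar in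
      (0 < eta * mu phi * rt ->
         aSAM <= aGD /\
         (0 < p ystar 0 < 1 -> rt != 0 -> aSAM < aGD)) /\
      (rt = 0 -> aSAM = aGD).
Proof.
exists (@sam_eta0 R V) => d phi y kappa W mu_gt0 kappa_ge0 p g e0.
split=> [|ys ys_ne_y ys_max eta rho _ _ eta_le rhoE rt aGD aSAM].
  exact: sam_eta0_gt0.
split=> [sign_gt0 | rt0]; last exact: alpha_sam_eq_gd.
have rt_neq0 : rt != 0 by apply: contraTneq sign_gt0 => ->; rewrite mulr0 ltxx.
have g_gt0 : 0 < vnorm g.
  rewrite lt_def (sqrtr_ge0 _ : 0 <= vnorm g) andbT.
  by apply: contraNneq rt_neq0 => g0; rewrite /rt /rhotilde g0 eqxx.
have V_gt0 : (0 < V)%N := leq_ltn_trans (leq0n y) (ltn_ord y).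
have c_gt0 := sam_radius_gt0 (softmax_gt0 (W *m phi)) (softmax_sum1 _ V_gt0).
have [a_le r_le] := step_sizes_le_sam_radius c_gt0 mu_gt0 g_gt0 kappa_ge0 eta_le rhoE.
have rtE : rt = rho * Num.sqrt (mu phi) / vnorm g by rewrite /rt /rhotilde gt_eqF.
rewrite -rtE in r_le.
have lt : aSAM < aGD := alpha_sam_lt_gd mu_gt0 ys_ne_y ys_max sign_gt0 a_le r_le.
by split=> [|_ _]; [apply: ltW|].
Qed.
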